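(* Let $\ell,m,n$ be positive integers with $\ell<n$, $m<n$, $\gcd(m,n)=1$, let $k\in\mathbb{Z}^+$ and $\chi\in\mathbb{Z}$ with $|\chi|<k$, and put $\tilde\ell=\ell_k^\pm+\chi$. Then $$\tilde\ell\,d_k^\pm\bmod n_k^\pm=\big((\ell d\bmod n)\pm\chi n\big)\bmod n_k^\pm,$$ with the same choice of sign throughout.
   Context: $d\in\{1,\dots,n-1\}$ is the inverse of $m$ mod $n$. The left and right Farey roots of $\frac mn$ are the fractions $\frac{m^-}{n^-}<\frac{m^+}{n^+}$ with $m^\pm\ge0$, $n^\pm\ge1$, $m^-+m^+=m$, $n^-+n^+=n$, $m^+n^--m^-n^+=1$. Put $\ell^+=\lceil\ell n^+/n\rceil$, $\ell^-=\lfloor\ell n^-/n\rfloor$, $\ell_k^\pm=k\ell+\ell^\pm$, $m_k^\pm=km+m^\pm$, $n_k^\pm=kn+n^\pm$, and let $d_k^\pm$ be the multiplicative inverse of $m_k^\pm$ modulo $n_k^\pm$. *)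

From mathcomp Require Import all_boot all_order all_algebra.
Set Implicit Arguments. Unset Strict Implicit. Unset Printing Implicit Defensive.

Definition ceil_div (a b : nat) : nat := (a + b - 1) %/ b.
Definition floor_div (a b : nat) : nat := a %/ b.

From mathcomp Require Import all_boot all_order all_algebra.
From mathcomp Require Import zify ring.
Import Order.TTheory GRing.Theory Num.Theory.

Set Implicit Arguments.
Unset Strict Implicit.

(** Write [N = k n + n^±] and [M = k m + m^±]. The Farey determinant gives
    [M n = m N + 1] on the right and [M n + 1 = m N] on the left, so [d_k^± = ± n]
    modulo [N], and multiplying by [d_k^±] is multiplying by [± n]. As
    [k l n = l N - l n^±], this turns [(l_k^± + chi) d_k^±] into
    [± (l^± n - l n^±) ± chi n]. The same determinant at [k = 0] shows
    [d = - n^+] and [d = n^-] modulo [n], hence [l^+ n - l n^+] and [l n^- - l^- n]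
    are both [l d mod n], the first because [l n^+ + (l d mod n)] is a multiple of
    [n] strictly below [l n^+ + n]. *)

Local Open Scope ring_scope.

Lemma modz_natE (a b N : nat) : (a = b %[mod N])%N -> (a%:Z = b%:Z %[mod N])%Z.
Proof. by move=> E; rewrite !modz_nat E. Qed.

Lemma ceil_div_eq (a b c r : nat) : (r < b)%N -> (a + r)%N = (c * b)%N -> ceil_div a b = c.
Proof.
move=> rb Ec; rewrite /ceil_div.
have -> : (a + b - 1 = c * b + (b - 1 - r))%N by lia.
by rewrite divnMDl ?divn_small ?addn0 //; lia.
Qed.

Lemma modz_inv_uniq (N a x y : int) :
  (a * x = 1 %[mod N])%Z -> (a * y = 1 %[mod N])%Z -> (x = y %[mod N])%Z.
Proof.
move=> ax1 ay1.
by rewrite -[x]mulr1 -modzMmr -ay1 modzMmr mulrA [x * a]mulrC -modzMml ax1 modzMml mul1r.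
Qed.

Lemma modz_mul_eq1 (a b c N : nat) : (a * b = c * N + 1)%N -> (a%:Z * b%:Z = 1 %[mod N])%Z.
Proof. by move=> E; rewrite -PoszM E PoszD PoszM modzMDl. Qed.

Lemma modz_mulN_eq1 (a b c N : nat) : (a * b + 1 = c * N)%N -> (a%:Z * - b%:Z = 1 %[mod N])%Z.
Proof.
move=> E; have Ez : a%:Z * b%:Z + 1 = c%:Z * N%:Z by rewrite -!PoszM -E.
have -> : a%:Z * - b%:Z = - c%:Z * N%:Z + 1 by rewrite mulNr -Ez; ring.
by rewrite modzMDl.
Qed.

Section FareyDetLift.

Variables (k mm mp nm np : nat).
Hypothesis farey_det : (mp * nm = mm * np + 1)%N.

Lemma farey_det_lift_right :
  ((k * (mm + mp) + mp) * (nm + np) = (mm + mp) * (k * (nm + np) + np) + 1)%N.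
Proof. nia. Qed.

Lemma farey_det_lift_left :
  ((k * (mm + mp) + mm) * (nm + np) + 1 = (mm + mp) * (k * (nm + np) + nm))%N.
Proof. nia. Qed.

End FareyDetLift.

Lemma mul_shift_modz (s k l l' n n' chi dk : int) :
  (dk = s * n %[mod k * n + n'])%Z ->
  ((k * l + l' + chi) * dk = s * (l' * n - l * n' + chi * n) %[mod k * n + n'])%Z.
Proof.
move=> Edk; rewrite -modzMmr Edk modzMmr.
have -> : (k * l + l' + chi) * (s * n) = (s * l) * (k * n + n') + s * (l' * n - l * n' + chi * n).
  by ring.
by rewrite modzMDl.
Qed.

Lemma right_root_mul_inv_modz (k l m n d mm nm mp np dk : nat) (chi : int) :
  (0 < n)%N -> (m * d = 1 %[mod n])%N ->
  (mm + mp)%N = m -> (nm + np)%N = n -> (mp * nm = mm * np + 1)%N ->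
  ((k * m + mp) * dk = 1 %[mod k * n + np])%N ->
  (((k * l + ceil_div (l * np) n)%:Z + chi) * dk%:Z = (l * d %% n)%:Z + chi * n%:Z
     %[mod (k * n + np)%:Z])%Z.
Proof.
move=> n_gt0 /modz_natE; rewrite PoszM => md1 Em En farey.
move=> /modz_natE; rewrite PoszM => dk_inv.
have Mn_inv := modz_mul_eq1 (farey_det_lift_right k farey); rewrite Em En in Mn_inv.
have dkE : (dk%:Z = 1 * n%:Z %[mod k%:Z * n%:Z + np%:Z])%Z.
  by rewrite mul1r -PoszM -PoszD; apply: modz_inv_uniq dk_inv Mn_inv.
have mnp_inv := modz_mulN_eq1 (esym (farey_det_lift_right 0 farey)).
rewrite !mul0n !add0n Em En in mnp_inv.
have dE : (d%:Z = - np%:Z %[mod n])%Z.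
  exact: modz_inv_uniq md1 mnp_inv.
set r := (l * d %% n)%N.
have /dvdnP[c Ec] : (n %| l * np + r)%N.
  rewrite -[(n %| _)%N]/(n%:Z %| (l * np + r)%N%:Z)%Z; apply/dvdz_mod0P.
  rewrite PoszD /r -modz_nat modzDmr !PoszM -mulrDr -modzMmr.
  by rewrite -modzDmr dE modzDmr subrr mod0z mulr0 mod0z.
have -> : ceil_div (l * np) n = c by apply: ceil_div_eq Ec; rewrite ltn_mod.
rewrite !PoszD !PoszM (mul_shift_modz l c chi dkE).
have -> : c%:Z * n%:Z - l%:Z * np%:Z = r%:Z by rewrite -!PoszM -Ec PoszD; ring.
by rewrite mul1r.
Qed.

Lemma left_root_mul_inv_modz (k l m n d mm nm mp np dk : nat) (chi : int) :
  (m * d = 1 %[mod n])%N ->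
  (mm + mp)%N = m -> (nm + np)%N = n -> (mp * nm = mm * np + 1)%N ->
  ((k * m + mm) * dk = 1 %[mod k * n + nm])%N ->
  (((k * l + floor_div (l * nm) n)%:Z + chi) * dk%:Z = (l * d %% n)%:Z - chi * n%:Z
     %[mod (k * n + nm)%:Z])%Z.
Proof.
move=> /modz_natE; rewrite PoszM => md1 Em En farey.
move=> /modz_natE; rewrite PoszM => dk_inv.
have Mn_inv := modz_mulN_eq1 (farey_det_lift_left k farey); rewrite Em En in Mn_inv.
have dkE : (dk%:Z = -1 * n%:Z %[mod k%:Z * n%:Z + nm%:Z])%Z.
  by rewrite mulN1r -PoszM -PoszD; apply: modz_inv_uniq dk_inv Mn_inv.
have mnm_inv := modz_mul_eq1 (esym (farey_det_lift_left 0 farey)).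
rewrite !mul0n !add0n Em En in mnm_inv.
have dE : (d%:Z = nm%:Z %[mod n])%Z by exact: modz_inv_uniq md1 mnm_inv.
set f := floor_div (l * nm) n; set r := (l * d %% n)%N.
have Ef : (l * nm = f * n + r)%N.
  suff -> : r = (l * nm %% n)%N by exact: divn_eq.
  by apply/eqP; rewrite -eqz_nat -!modz_nat !PoszM -modzMmr dE modzMmr.
rewrite !PoszD !PoszM (mul_shift_modz l f chi dkE).
have -> : f%:Z * n%:Z - l%:Z * nm%:Z = - r%:Z by rewrite -!PoszM Ef PoszD; ring.
by rewrite mulN1r opprD opprK.
Qed.

Local Close Scope ring_scope.

Theorem lemma3p6 (l m n d mm nm mp np k : nat) (chi : int) :
  0 < l -> 0 < m -> l < n -> m < n -> coprime m n ->
  (* d in {1,...,n-1} is the inverse of m mod n *)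
  0 < d < n -> m * d = 1 %[mod n] ->
  (* Farey roots mm/nm < mp/np of m/n *)
  0 < nm -> 0 < np -> mm + mp = m -> nm + np = n -> mp * nm = mm * np + 1 ->
  0 < k -> (`|chi| < k%:Z)%R ->
  (* sign + *)
  (forall dkp : nat,
     0 < dkp < k * n + np -> (k * m + mp) * dkp = 1 %[mod k * n + np] ->
     (((Posz (k * l + ceil_div (l * np) n) + chi) * Posz dkp) %% Posz (k * n + np))%Z
     = ((Posz (l * d %% n) + chi * Posz n) %% Posz (k * n + np))%Z)
  /\
  (* sign - *)
  (forall dkm : nat,
     0 < dkm < k * n + nm -> (k * m + mm) * dkm = 1 %[mod k * n + nm] ->
     (((Posz (k * l + floor_div (l * nm) n) + chi) * Posz dkm) %% Posz (k * n + nm))%Z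
     = ((Posz (l * d %% n) - chi * Posz n) %% Posz (k * n + nm))%Z).
Proof.
move=> _ _ l_lt_n _ _ _ md1 _ _ Em En farey _ _.
have n_gt0 : 0 < n by apply: leq_ltn_trans l_lt_n.
split=> dk _ dk_inv.
- exact: right_root_mul_inv_modz md1 Em En farey dk_inv.
- exact: left_root_mul_inv_modz md1 Em En farey dk_inv.
Qed.
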